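(* Let $K\ge1$, $\delta\in(0,1)$, and real parameters $\theta_1,\dots,\theta_K$. For each $i\in[K]$ let $E_i^+$ be an e-value with respect to $[0,\infty)$ (i.e. $E_i^+\ge0$ and $\mathbb{E}[E_i^+]\le1$ whenever $\theta_i\ge0$) and $E_i^-$ an e-value with respect to $(-\infty,0]$ (i.e. $E_i^-\ge0$ and $\mathbb{E}[E_i^-]\le1$ whenever $\theta_i\le0$), with $E_i^+=(E_i^-)^{-1}$, and set $E_i=(E_i^+\vee E_i^-)/2$. The e-values may be arbitrarily dependent across $i$. Let $E_{(1)}\ge\dots\ge E_{(K)}$ be the ordered $E_i$, let $k=\max\{k\in[K]: E_{(k)}\ge K/(\delta k)\}$ (with $k=0$ if the set is empty), and let $R$ be the set of indices of the $k$ largest $E_i$. For each $i\in R$ set $D_i=-1$ if $E_i^+\ge K/(\delta k)$ and $D_i=1$ otherwise. Then $$\mathrm{dFDR}=\mathbb{E}\left[\frac{\sum_{i\in R}\left(\mathbf 1\{D_i=1,\theta_i\le0\}+\mathbf 1\{D_i=-1,\theta_i\ge0\}\right)}{|R|\vee 1}\right]\le\delta .$$ *)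

From HB Require Import structures.
From mathcomp Require Import all_boot all_order all_algebra.
From mathcomp Require Import all_classical all_reals all_analysis measurable_realfun.
Set Implicit Arguments. Unset Strict Implicit. Unset Printing Implicit Defensive.
Import Order.TTheory GRing.Theory Num.Theory.
Local Open Scope ring_scope.

Section EBH.
Variables (R : realType) (K : nat) (delta : R).

Definition Ecomb (Ep Em : \bar R) : \bar R :=
  (maxe Ep Em * (2^-1)%:E)%E.

Definition thr (k : nat) : R := K%:R / (delta * k%:R).

(* ordered values E_(1) >= ... >= E_(K);  Eord E k = E_(k) for 1 <= k <= K *)
Definition Eord (E : 'I_K -> \bar R) (k : nat) : \bar R :=
  nth 0%E (sort (fun x y : \bar R => (y <= x)%E) [seq E i | i <- enum 'I_K]) k.-1.

Definition kstar (E : 'I_K -> \bar R) : nat :=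
  \max_(k < K.+1 | (0 < k)%N && ((thr k)%:E <= Eord E k)%E) k.

Definition Rset (E : 'I_K -> \bar R) : {set 'I_K} :=
  [set i | (0 < kstar E)%N && (Eord E (kstar E) <= E i)%E].

Definition Dsign (Ep : \bar R) (k : nat) : int :=
  if ((thr k)%:E <= Ep)%E then (-1)%R else 1%R.

Definition FDP (theta : 'I_K -> R) (Ep Em : 'I_K -> \bar R) : R :=
  let E := fun i => Ecomb (Ep i) (Em i) in
  let k := kstar E in
  let Rs := Rset E in
  (\sum_(i in Rs)
     ((((Dsign (Ep i) k == 1%R) && (theta i <= 0)) : nat)%:R
      + (((Dsign (Ep i) k == (-1)%R) && (0 <= theta i)) : nat)%:R))
  / (maxn #|Rs| 1)%:R.

End EBH.

From HB Require Import structures.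
From mathcomp Require Import all_boot all_order all_algebra.
From mathcomp Require Import all_classical all_reals all_analysis measurable_realfun.
From mathcomp Require Import ring.
Import Order.TTheory GRing.Theory Num.Theory.
Local Open Scope ring_scope.
Set Implicit Arguments. Unset Strict Implicit.

(* For each [i] let [H_i] be the e-value of the null hypothesis that actually
   holds for [theta_i]: [E_i^+] if [theta_i > 0], [E_i^-] if [theta_i < 0], and
   [E_i] if [theta_i = 0], where both nulls hold and [E_i <= (E_i^+ + E_i^-)/2].
   A false discovery [i] in [R] forces [H_i >= K / (delta k)]: either [D_i]
   points against the sign of [theta_i], or [theta_i = 0] and [H_i = E_i].
   Since [|R| >= k], pointwise [FDP <= (delta / K) * sum_i H_i], and taking
   expectations gives [dFDR <= delta]. *)

Section order_statistics.
Variables (R : realType) (K : nat).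
Implicit Types (E : 'I_K -> \bar R) (delta : R).

Lemma card_ge_Eord E k : (0 < k <= K)%N ->
  (k <= #|[set i | (Eord E k <= E i)%E]|)%N.
Proof.
move=> /andP[k0 kK]; rewrite /Eord; set s := sort _ _.
have size_s : size s = K by rewrite size_sort size_map size_enum_ord.
have sorted_s : sorted (fun x y : \bar R => (y <= x)%E) s.
  by apply: sort_sorted => x y; exact: le_total.
pose p x := (nth 0%E s k.-1 <= x)%E.
have -> : #|[set i | (nth 0%E s k.-1 <= E i)%E]| = count p s.
  by rewrite cardE /enum_mem size_filter count_sort count_map -enumT;
    apply: eq_count => i; rewrite /= inE.
rewrite -(cat_take_drop k s) count_cat.
have -> : count p (take k s) = k.
  rewrite -{2}(size_takel (s := s) (_ : k <= size s)%N) ?size_s //.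
  apply/eqP; rewrite -all_count; apply/(all_nthP 0%E) => j.
  rewrite size_takel ?size_s // => jk; rewrite nth_take //.
  apply: (sorted_leq_nth _ _ _ sorted_s) => //.
  - by move=> x y z /= yx zy; exact: le_trans zy yx.
  - by rewrite inE size_s (leq_trans jk).
  - by rewrite inE size_s prednK // (leq_trans _ kK).
  - by rewrite -ltnS prednK.
exact: leq_addr.
Qed.

Lemma kstar_leq delta E : (kstar delta E <= K)%N.
Proof. by apply/bigmax_leqP => i _; rewrite -ltnS. Qed.

Lemma thr_kstar_le_Eord delta E : (0 < kstar delta E)%N ->
  ((thr K delta (kstar delta E))%:E <= Eord E (kstar delta E))%E.
Proof.
rewrite /kstar.
have [k0 Pk0|P0] :=
  pickP (fun k : 'I_K.+1 => (0 < k)%N && ((thr K delta k)%:E <= Eord E k)%E).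
  rewrite (bigop.bigmax_eq_arg _ (F := @nat_of_ord K.+1) Pk0).
  by case: arg_maxnP => // k /andP[].
by rewrite big_pred0.
Qed.

Lemma RsetE delta E : (0 < kstar delta E)%N ->
  Rset delta E = [set i | (Eord E (kstar delta E) <= E i)%E].
Proof. by move=> k0; apply/setP => i; rewrite !inE k0. Qed.

Lemma kstar_le_card_Rset delta E : (kstar delta E <= #|Rset delta E|)%N.
Proof.
have [->//|k0] := posnP (kstar delta E).
by rewrite RsetE // card_ge_Eord // k0 kstar_leq.
Qed.

End order_statistics.

Section oracle_evalue.
Variable R : realType.
Implicit Types (t : R) (a b : \bar R).

Lemma Ecomb_ge0 a b : (0 <= a)%E -> (0 <= Ecomb a b)%E.
Proof.
move=> a0; apply: mule_ge0; last by rewrite lee_fin invr_ge0.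
by rewrite le_max a0.
Qed.

Lemma Ecomb_le_maxe a b : (0 <= a)%E -> (Ecomb a b <= maxe a b)%E.
Proof.
move=> a0; rewrite /Ecomb.
have : (0 <= maxe a b)%E by rewrite le_max a0.
case: (maxe a b) => [r| |] //= r0; last by rewrite leey.
by rewrite lee_fin ler_piMr // invf_le1 // ler1n.
Qed.

Definition oracle_evalue t a b : \bar R :=
  if 0 < t then a else if t < 0 then b else Ecomb a b.

Lemma oracle_evalue_ge0 t a b :
  (0 <= a)%E -> (0 <= b)%E -> (0 <= oracle_evalue t a b)%E.
Proof.
move=> a0 b0; rewrite /oracle_evalue.
by do 2?case: ifP => _ //; exact: Ecomb_ge0.
Qed.

Definition false_discovery t (D : int) : R :=
  (((D == 1) && (t <= 0)) : nat)%:R + (((D == -1) && (0 <= t)) : nat)%:R.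

Lemma false_discovery_ge0 t D : 0 <= false_discovery t D.
Proof. exact: addr_ge0. Qed.

Lemma false_discovery_le_oracle_evalue K delta k t a b :
  (0 <= a)%E -> (0 <= b)%E -> 0 <= thr K delta k ->
  ((thr K delta k)%:E <= Ecomb a b)%E ->
  ((false_discovery t (Dsign K delta a k) * thr K delta k)%:E
     <= oracle_evalue t a b)%E.
Proof.
move=> a0 b0 thr0 thr_le; rewrite /false_discovery /Dsign /oracle_evalue.
have [t_gt0|t_lt0|_] := ltgtP 0 t; case: ifP => thr_a /=;
  rewrite ?add0r ?addr0 ?mul0r ?mul1r //.
by have := le_trans thr_le (Ecomb_le_maxe b a0); rewrite le_max thr_a.
Qed.

End oracle_evalue.

Section FDP_bound.
Variables (R : realType) (K : nat) (delta : R) (theta : 'I_K -> R).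
Variables (ep em : 'I_K -> \bar R).
Hypotheses (K_gt0 : (0 < K)%N) (delta_gt0 : 0 < delta).
Hypotheses (ep_ge0 : forall i, (0 <= ep i)%E) (em_ge0 : forall i, (0 <= em i)%E).

Lemma FDP_ge0 : 0 <= FDP delta theta ep em.
Proof.
by apply: divr_ge0 => //; apply: sumr_ge0 => i _; exact: false_discovery_ge0.
Qed.

Lemma mul_thr k : (0 < k)%N -> delta / K%:R * thr K delta k = k%:R^-1.
Proof.
move=> k_gt0; rewrite /thr; field.
by rewrite !pnatr_eq0 -!lt0n K_gt0 k_gt0 gt_eqF.
Qed.

Lemma FDP_le_sum_oracle_evalue :
  ((FDP delta theta ep em)%:E <=
     \sum_(i < K) ((delta / K%:R)%:E * oracle_evalue (theta i) (ep i) (em i)))%E.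
Proof.
set E := fun i => Ecomb (ep i) (em i); set k := kstar delta E.
set w := delta / K%:R.
have w_ge0 : 0 <= w by rewrite divr_ge0 // ltW.
have term_ge0 i : (0 <= w%:E * oracle_evalue (theta i) (ep i) (em i))%E.
  by rewrite mule_ge0 ?lee_fin // oracle_evalue_ge0.
set fd := fun i => false_discovery (theta i) (Dsign K delta (ep i) k).
have -> : FDP delta theta ep em =
    (\sum_(i in Rset delta E) fd i) / (maxn #|Rset delta E| 1)%:R by [].
have [k0|k_gt0] := posnP k.
  have -> : Rset delta E = finset.set0 by apply/setP => i; rewrite !inE -/k k0.
  by rewrite big_set0 mul0r sume_ge0.
have thr_gt0 : 0 < thr K delta k by rewrite divr_gt0 ?mulr_gt0 ?ltr0n.
have FDP_le : (((\sum_(i in Rset delta E) fd i) / (maxn #|Rset delta E| 1)%:R)%:E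
    <= ((\sum_(i in Rset delta E) fd i) / k%:R)%:E)%E.
  rewrite lee_fin; apply: ler_wpM2l.
    by apply: sumr_ge0 => i _; exact: false_discovery_ge0.
  rewrite lef_pV2 ?posrE ?ltr0n ?leq_max ?orbT //.
  by rewrite ler_nat leq_max kstar_le_card_Rset.
apply: le_trans (_ : \sum_(i in Rset delta E)
    w%:E * oracle_evalue (theta i) (ep i) (em i) <= _)%E.
  apply: le_trans FDP_le _.
  rewrite -(mul_thr k_gt0) mulr_suml -sumEFin lee_sum // => i.
  rewrite RsetE // inE => Eord_le_Ei.
  rewrite mulrCA EFinM lee_wpmul2l ?lee_fin //.
  apply: false_discovery_le_oracle_evalue => //; first exact: ltW.
  exact: le_trans (thr_kstar_le_Eord k_gt0) Eord_le_Ei.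
by rewrite big_mkcond lee_sum // => i _; case: ifP.
Qed.

End FDP_bound.

Section oracle_evalue_integral.
Context d (T : measurableType d) (R : realType) (mu : {measure set T -> \bar R}).
Local Open Scope ereal_scope.

(* The nonnegative integral is a supremum over the simple functions below the
   integrand, so it is monotone without measurability: [FDP] is never shown
   measurable. *)
Lemma ge0_le_integralT (f g : T -> \bar R) : (forall x, 0 <= f x) ->
  (forall x, f x <= g x) -> \int[mu]_x f x <= \int[mu]_x g x.
Proof.
move=> f0 fg; have g0 x : 0 <= g x by exact: le_trans (f0 x) (fg x).
rewrite !ge0_integralTE //; apply: ereal_sup_le => _ [h hf <-].
by exists h => // x; exact: le_trans (hf x) (fg x).
Qed.

Variables (a b : T -> \bar R).
Hypotheses (ma : measurable_fun setT a) (mb : measurable_fun setT b).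
Hypotheses (a_ge0 : forall x, 0 <= a x) (b_ge0 : forall x, 0 <= b x).

Lemma Ecomb_integral_le1 : \int[mu]_x a x <= 1 -> \int[mu]_x b x <= 1 ->
  \int[mu]_x Ecomb (a x) (b x) <= 1.
Proof.
move=> ia ib.
have max_ge0 x : 0 <= maxe (a x) (b x) by rewrite le_max a_ge0.
have int_max : \int[mu]_x maxe (a x) (b x) <= 2%:E.
  apply: le_trans (ge0_le_integralT (g := fun x => a x + b x) max_ge0 _) _.
    by move=> x; rewrite ge_max leeDl // leeDr.
  by rewrite ge0_integralD //; apply: le_trans (leeD ia ib) _; rewrite -EFinD.
rewrite /Ecomb ge0_integralZr //; last exact: measurable_maxe.
apply: le_trans (lee_wpmul2r _ int_max) _; first by rewrite lee_fin invr_ge0.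
by rewrite -EFinM mulfV.
Qed.

Lemma measurable_oracle_evalue (t : R) :
  measurable_fun setT (fun x => oracle_evalue t (a x) (b x)).
Proof.
rewrite /oracle_evalue; case: (0 < t)%R => //; case: (t < 0)%R => //.
apply: emeasurable_funM; last exact: measurable_cst.
exact: measurable_maxe.
Qed.

Lemma oracle_evalue_integral_le1 (t : R) :
  ((0 <= t)%R -> \int[mu]_x a x <= 1) -> ((t <= 0)%R -> \int[mu]_x b x <= 1) ->
  \int[mu]_x oracle_evalue t (a x) (b x) <= 1.
Proof.
move=> ia ib; rewrite /oracle_evalue.
have [t_gt0|t_lt0|t0] := ltgtP 0%R t; [exact/ia/ltW|exact/ib/ltW|].
by apply: Ecomb_integral_le1; [apply: ia|apply: ib]; rewrite -t0.
Qed.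

End oracle_evalue_integral.

Unset Implicit Arguments. Set Strict Implicit.

Theorem corollary3 (d : measure_display) (T : measurableType d) (R : realType)
  (P : probability T R) (K : nat) (hK : (1 <= K)%N) (delta : R)
  (hdelta0 : 0 < delta) (hdelta1 : delta < 1)
  (theta : 'I_K -> R) (Ep Em : 'I_K -> T -> \bar R)
  (mEp : forall i, measurable_fun setT (Ep i))
  (mEm : forall i, measurable_fun setT (Em i))
  (Ep_ge0 : forall i w, (0 <= Ep i w)%E)
  (Em_ge0 : forall i w, (0 <= Em i w)%E)
  (Ep_e : forall i, 0 <= theta i -> (\int[P]_w Ep i w <= 1)%E)
  (Em_e : forall i, theta i <= 0 -> (\int[P]_w Em i w <= 1)%E)
  (Epm : forall i w, Ep i w = ((Em i w)^-1)%E) :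
  (\int[P]_w (@FDP R K delta theta (fun i => Ep i w) (fun i => Em i w))%:E
     <= delta%:E)%E.
Proof.
pose c := delta / K%:R.
have c_ge0 : 0 <= c by rewrite divr_ge0 // ltW.
pose H i w := oracle_evalue (theta i) (Ep i w) (Em i w).
have H_ge0 i w : (0 <= H i w)%E by exact: oracle_evalue_ge0.
have mH i : measurable_fun setT (H i) by exact: measurable_oracle_evalue.
apply: le_trans
  (@ge0_le_integralT _ _ _ P _ (fun w => \sum_(i < K) c%:E * H i w)%E _ _) _.
- by move=> w; rewrite lee_fin FDP_ge0.
- by move=> w; exact: FDP_le_sum_oracle_evalue.
have mcH i : measurable_fun setT (fun w => c%:E * H i w)%E.
  exact: measurable_funeM.
have cH_ge0 i w : (0 <= c%:E * H i w)%E by rewrite mule_ge0 ?lee_fin.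
rewrite ge0_integral_sum //.
apply: (@le_trans _ _ (\sum_(i < K) c%:E)%E).
  apply: lee_sum => i _; rewrite ge0_integralZl_EFin //.
  rewrite -[X in (_ <= X)%E]mule1 lee_wpmul2l ?lee_fin //.
  exact: oracle_evalue_integral_le1 (Ep_e i) (Em_e i).
by rewrite sumEFin sumr_const card_ord -mulr_natr divfK // pnatr_eq0 -lt0n.
Qed.
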